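(* Let $W$ be a $\beta$-decomposable matrix and let $A$ be a positive semi-definite matrix whose diagonal entries are upper bounded by $\alpha$. Then $W\otimes A$ is $(\alpha\cdot\beta)$-decomposable.
   Context: For an $n\times m$ matrix $W$, $\mathrm{sym}(W)=\begin{bmatrix}0 & W\\ W^T & 0\end{bmatrix}$; $W$ is $\beta$-decomposable if there exist PSD matrices $P,N$ with $\mathrm{sym}(W)=P-N$ and $P_{ii},N_{ii}\le\beta$ for all $i$. $\otimes$ denotes the tensor (Kronecker) product: for $A\in M_{n\times m}$, $B\in M_{k\times l}$, $A\otimes B$ is the $(nk)\times(ml)$ block matrix with blocks $A_{i,j}B$. *)

From mathcomp Require Import all_boot all_order all_algebra.
From mathcomp Require Import all_reals.
From mathcomp.real_closed Require Export mxtens.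
Set Implicit Arguments. Unset Strict Implicit. Unset Printing Implicit Defensive.
Import Order.TTheory GRing.Theory Num.Theory.
Local Open Scope ring_scope.

Definition psd (R : realType) (n : nat) (M : 'M[R]_n) : Prop :=
  M^T = M /\ forall x : 'cV[R]_n, 0 <= (x^T *m M *m x) ord0 ord0.

Definition symmx (R : realType) (n m : nat) (W : 'M[R]_(n, m)) : 'M[R]_(n + m) :=
  block_mx 0 W W^T 0.

Definition decomposable (R : realType) (n m : nat) (beta : R) (W : 'M[R]_(n, m)) : Prop :=
  exists P N : 'M[R]_(n + m),
    [/\ psd P, psd N, symmx W = P - N &
        forall i, P i i <= beta /\ N i i <= beta].

(* A PSD matrix is a Gram matrix [B^T B] (eliminate a pivot by a congruence and recurse),
   so the Kronecker product of PSD matrices is the Gram matrix of [C *t B], hence PSD.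
   Up to a simultaneous permutation of rows and columns, [sym (W *t A)] is
   [sym W *t A = P *t A - N *t A], and the diagonal entries of [P *t A] are products
   [P i i * A a a <= beta * alpha]. *)
From mathcomp Require Import all_boot all_order all_algebra.
From mathcomp Require Import all_reals.
From mathcomp.real_closed Require Import mxtens.
From mathcomp Require Import ring lra.
Import Order.TTheory GRing.Theory Num.Theory.
Local Open Scope ring_scope.

Section Psd.
Set Implicit Arguments. Unset Strict Implicit. Unset Printing Implicit Defensive.
Variable R : realType.

Definition bform n (A : 'M[R]_n) (x y : 'cV[R]_n) : R := (x^T *m A *m y) ord0 ord0.

Lemma bformDl n (A : 'M[R]_n) x y z : bform A (x + y) z = bform A x z + bform A y z.
Proof. by rewrite /bform linearD /= !mulmxDl mxE. Qed.

Lemma bformDr n (A : 'M[R]_n) x y z : bform A z (x + y) = bform A z x + bform A z y.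
Proof. by rewrite /bform !mulmxDr mxE. Qed.

Lemma bformZl n (A : 'M[R]_n) t x z : bform A (t *: x) z = t * bform A x z.
Proof. by rewrite /bform linearZ /= -!scalemxAl mxE. Qed.

Lemma bformZr n (A : 'M[R]_n) t x z : bform A z (t *: x) = t * bform A z x.
Proof. by rewrite /bform -!scalemxAr mxE. Qed.

Lemma bform_delta n (A : 'M[R]_n) i j :
  bform A (delta_mx i 0) (delta_mx j 0) = A i j.
Proof. by rewrite /bform trmx_delta -rowE -colE !mxE. Qed.

Lemma psd_sym n (A : 'M[R]_n) i j : psd A -> A j i = A i j.
Proof. by case=> sA _; rewrite -{1}sA mxE. Qed.

Lemma psd_diag_ge0 n (A : 'M[R]_n) i : psd A -> 0 <= A i i.
Proof. by case=> _ qA; rewrite -bform_delta; apply: qA. Qed.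

(* On [e_j + t e_i] the form is [A j j + 2 t A i j], negative for a suitable [t]
   unless [A i j = 0]. *)
Lemma psd_diag0_eq0 n (A : 'M[R]_n) i j : psd A -> A i i = 0 -> A i j = 0.
Proof.
move=> pA Aii; apply/eqP; apply: contraT => nz.
set c := A i j; set d := A j j; set t := - (d + 1) / (2 * c).
have := pA.2 (delta_mx j 0 + t *: delta_mx i 0).
rewrite -/(bform A _ _) bformDl !bformDr !bformZl !bformZr !bform_delta.
rewrite Aii (psd_sym _ _ pA) -/c -/d.
have tc : t * c = - (d + 1) / 2 by rewrite /t; field; rewrite nz.
lra.
Qed.

Lemma psd_diag0 n (A : 'M[R]_n) : psd A -> (forall j, A j j = 0) -> A = 0.
Proof. by move=> pA A0; apply/matrixP => i j; rewrite mxE (psd_diag0_eq0 _ pA). Qed.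

Lemma psd_congr p q (M : 'M[R]_p) (S : 'M[R]_(p, q)) : psd M -> psd (S^T *m M *m S).
Proof.
case=> sM qM; split; first by rewrite !trmx_mul trmxK sM mulmxA.
by move=> x; have := qM (S *m x); rewrite trmx_mul !mulmxA.
Qed.

Lemma psd_gram p q (B : 'M[R]_(p, q)) : psd (B^T *m B).
Proof.
split=> [|x]; first by rewrite trmx_mul trmxK.
rewrite !mulmxA -trmx_mul -mulmxA mxE.
by apply: sumr_ge0 => i _; rewrite mxE -expr2 sqr_ge0.
Qed.

(* Gaussian elimination of row and column [i]: with [c = col i A] and [a = A i i],
   [S = 1 - a^-1 e_i c^T] gives [S^T A S = A - a^-1 c c^T]. *)
Lemma psd_schur n (A : 'M[R]_n) i : psd A -> A i i != 0 ->
  psd (A - (A i i)^-1 *: (col i A *m (col i A)^T)).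
Proof.
move=> pA nz; set a := A i i; pose e : 'cV[R]_n := delta_mx i 0.
have cE : col i A = A *m e by rewrite colE.
have ctE : (col i A)^T = e^T *m A by rewrite cE trmx_mul pA.1.
have cte : (col i A)^T *m e = a%:M.
  by apply/matrixP => x y; rewrite ctE !ord1 -/(bform A e e) bform_delta mxE.
set c := col i A; set S := 1%:M - a^-1 *: (e *m c^T).
suff <- : S^T *m A *m S = A - a^-1 *: (c *m c^T) by apply: psd_congr.
have StA : S^T *m A = A - a^-1 *: (c *m c^T).
  rewrite /S linearB /= linearZ /= trmx1 trmx_mul trmxK.
  by rewrite mulmxBl mul1mx -scalemxAl -mulmxA -ctE.
have AeM : A *m (e *m c^T) = c *m c^T by rewrite mulmxA -cE.
have MeM : c *m c^T *m (e *m c^T) = a *: (c *m c^T).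
  by rewrite mulmxA -(mulmxA c) cte mul_mx_scalar -scalemxAl.
rewrite StA /S mulmxBr mulmx1 -!scalemxAr mulmxBl -scalemxAl AeM MeM.
by rewrite scalerA mulVf // scale1r subrr scaler0 subr0.
Qed.

(* Induction on the number of nonzero diagonal entries: each Schur step kills the pivot
   and cannot create new nonzero diagonal entries. *)
Lemma psd_gram_factor n (A : 'M[R]_n) :
  psd A -> exists p (B : 'M[R]_(p, n)), A = B^T *m B.
Proof.
have [N] := ubnP #|[set j | A j j != 0]|; elim: N A => // N IH A ltdN pA.
have [/forallP A0 | /forallPn [i nzi]] := boolP [forall j, A j j == 0].
  by exists 0%N, 0; rewrite mulmx0 (psd_diag0 pA) // => j; apply/eqP.
set a := A i i; set c := col i A.
set A' := A - a^-1 *: (c *m c^T).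
have a_gt0 : 0 < a by rewrite lt_def nzi psd_diag_ge0.
have pA' : psd A' := psd_schur pA nzi.
have A'E j : A' j j = A j j - a^-1 * A j i ^+ 2.
  by rewrite !mxE big_ord1 !mxE expr2.
have [p [B' A'_gram]] : exists p (B : 'M[R]_(p, n)), A' = B^T *m B.
  apply: IH (pA'); rewrite ltnS in ltdN; apply: leq_trans ltdN.
  rewrite [X in (_ < X)%N](cardsD1 i) inE nzi add1n ltnS.
  apply: subset_leq_card; apply/subsetP => j; rewrite !inE.
  apply: contraTT; rewrite negb_and !negbK => /orP[/eqP -> | /eqP Ajj].
    by rewrite A'E -/a expr2 mulKf ?subrr.
  rewrite eq_le (psd_diag_ge0 _ pA') andbT A'E Ajj sub0r oppr_le0.
  by rewrite mulr_ge0 ?sqr_ge0 // invr_ge0 ltW.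
have inv_sqrt2 : (Num.sqrt a)^-1 * (Num.sqrt a)^-1 = a^-1.
  by rewrite -invfM -expr2 sqr_sqrtr // ltW.
exists (1 + p)%N, (col_mx ((Num.sqrt a)^-1 *: c^T) B').
rewrite tr_col_mx mul_row_col -A'_gram -scalemxAr linearZ /= trmxK -scalemxAl scalerA.
by rewrite inv_sqrt2 /A' addrC subrK.
Qed.

Lemma psd_tensmx n k (P : 'M[R]_n) (A : 'M[R]_k) : psd P -> psd A -> psd (P *t A).
Proof.
move=> /psd_gram_factor [p [C ->]] /psd_gram_factor [q [B ->]].
by rewrite -tensmx_mul -trmx_tens; apply: psd_gram.
Qed.

Lemma psd_mxsub p q (f : 'I_q -> 'I_p) (M : 'M[R]_p) : psd M -> psd (mxsub f f M).
Proof.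
suff -> : mxsub f f M = (colsub f 1%:M)^T *m M *m colsub f 1%:M by apply: psd_congr.
by rewrite mulmx_colsub mulmx1 trmx_mxsub trmx1 mul_rowsub_mx mul1mx mxsubcr.
Qed.

Lemma tensmx_diag_le n k (P : 'M[R]_n) (A : 'M[R]_k) (b a : R) u :
  psd P -> psd A -> (forall i, P i i <= b) -> (forall j, A j j <= a) ->
  (P *t A) u u <= a * b.
Proof.
move=> pP pA Pb Aa; case: (mxtens_indexP u) => i j; rewrite tensmxE mulrC.
by apply: ler_pM; rewrite ?psd_diag_ge0.
Qed.

(* Row [(r, a)] of the upper (resp. lower) block of [sym (W *t A)] is row
   [(lshift m r, a)] (resp. [(rshift n r, a)]) of [sym W *t A]; likewise for columns. *)
Definition symmx_tens_index n m k (u : 'I_(n * k + m * k)) : 'I_((n + m) * k) :=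
  match split u with
  | inl i => mxtens_index (lshift m (mxtens_unindex i).1, (mxtens_unindex i).2)
  | inr j => mxtens_index (rshift n (mxtens_unindex j).1, (mxtens_unindex j).2)
  end.

Lemma symmx_tens_indexl n m k i a :
  @symmx_tens_index n m k (lshift (m * k) (mxtens_index (i, a)))
  = mxtens_index (lshift m i, a).
Proof. by rewrite /symmx_tens_index (unsplitK (inl _)) mxtens_indexK. Qed.

Lemma symmx_tens_indexr n m k i a :
  @symmx_tens_index n m k (rshift (n * k) (mxtens_index (i, a)))
  = mxtens_index (rshift n i, a).
Proof. by rewrite /symmx_tens_index (unsplitK (inr _)) mxtens_indexK. Qed.

Lemma symmx_tensmx n m k (W : 'M[R]_(n, m)) (A : 'M[R]_k) : A^T = A ->
  symmx (W *t A) =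
  mxsub (@symmx_tens_index n m k) (@symmx_tens_index n m k) (symmx W *t A).
Proof.
move=> sA; apply/matrixP => u v; rewrite [RHS]mxE /symmx -(splitK u) -(splitK v).
case: (split u) => i; case: (split v) => j;
  case: (mxtens_indexP i) => r a; case: (mxtens_indexP j) => s b;
  rewrite /= ?symmx_tens_indexl ?symmx_tens_indexr tensmxE.
- by rewrite (block_mxEul 0 (W *t A)) block_mxEul !mxE mul0r.
- by rewrite (block_mxEur 0 (W *t A)) block_mxEur tensmxE.
- by rewrite (block_mxEdl 0 (W *t A)) block_mxEdl trmx_tens tensmxE sA.
- by rewrite (block_mxEdr 0 (W *t A)) block_mxEdr !mxE mul0r.
Qed.

End Psd.

Theorem proposition1 (R : realType) (n m k : nat) (alpha beta : R)
    (W : 'M[R]_(n, m)) (A : 'M[R]_k) :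
  decomposable beta W ->
  psd A ->
  (forall i, A i i <= alpha) ->
  decomposable (alpha * beta) (tensmx W A).
Proof.
move=> [P [N [pP pN eW hPN]]] pA hA.
pose f := @symmx_tens_index n m k.
exists (mxsub f f (P *t A)), (mxsub f f (N *t A)); split.
- exact/psd_mxsub/psd_tensmx.
- exact/psd_mxsub/psd_tensmx.
- rewrite symmx_tensmx ?pA.1 // eW.
  by apply/matrixP => u v; rewrite !mxE mulrBl.
move=> u; rewrite ![mxsub _ _ _ u u]mxE.
by split; apply: tensmx_diag_le => // i; [exact: (hPN i).1 | exact: (hPN i).2].
Qed.
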